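(* Let $A$ be a Noetherian commutative ring with identity, let $A[\mathbf{x}]=A[x_1,\ldots,x_n]$ be equipped with a monomial order, let $I\subset A[\mathbf{x}]$ be an ideal, let $q\subset A$ be an isolated primary component of $I\cap A$ (i.e. a primary component whose associated prime is a minimal prime of $I\cap A$), and let $p\subset A$ be its associated minimal prime. Define $B=A_p/q_p$. Then $$\mathrm{in}(I)\,B[\mathbf{x}]=\mathrm{in}(I\,B[\mathbf{x}]).$$
   Context: A monomial order $>$ is a total order on monomials such that $\mathbf{x}^E>\mathbf{x}^F$ implies $\mathbf{x}^G\mathbf{x}^E>\mathbf{x}^G\mathbf{x}^F$, and $x_i>1$ for each $i$; the same order is used over $B$. $\mathrm{in}(f)$ is the greatest term $c\,\mathbf{x}^E$ ($c\neq0$) of a nonzero polynomial $f$; $\mathrm{in}(I)$ is the ideal generated by all $\mathrm{in}(f)$, $f\in I$. $K\,B[\mathbf{x}]$ denotes the ideal of $B[\mathbf{x}]$ generated by the image of $K\subset A[\mathbf{x}]$ under the natural map $A\to B$ applied to coefficients. *)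

From HB Require Import structures.
From mathcomp Require Import all_boot all_order all_algebra.
From mathcomp Require Import finmap multinomials.mpoly.
Set Implicit Arguments. Unset Strict Implicit. Unset Printing Implicit Defensive.
Import GRing.Theory.
Local Open Scope ring_scope.

Definition subset_of (T : Type) (S S' : T -> Prop) := forall x, S x -> S' x.

Definition is_ideal (R : comNzRingType) (I : R -> Prop) :=
  [/\ I 0, (forall x y, I x -> I y -> I (x + y)) & (forall r x, I x -> I (r * x))].

Definition gen_ideal (R : comNzRingType) (S : R -> Prop) : R -> Prop :=
  fun x => exists l : seq (R * R),
      (forall pr, pr \in l -> S pr.2) /\ x = \sum_(pr <- l) pr.1 * pr.2.

Definition image_set (T U : Type) (f : T -> U) (S : T -> Prop) : U -> Prop :=
  fun y => exists x, S x /\ y = f x.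

Definition noetherian (R : comNzRingType) :=
  forall I : R -> Prop, is_ideal I ->
    exists l : seq R, forall x, I x <-> gen_ideal (fun y => y \in l) x.

Definition prime_ideal (R : comNzRingType) (P : R -> Prop) :=
  [/\ is_ideal P, ~ P 1 & forall a b, P (a * b) -> P a \/ P b].

Definition primary_ideal (R : comNzRingType) (Q : R -> Prop) :=
  [/\ is_ideal Q, ~ Q 1 &
      forall a b, Q (a * b) -> Q a \/ exists k : nat, Q (b ^+ k)].

Definition radical (R : comNzRingType) (Q : R -> Prop) : R -> Prop :=
  fun a => exists k : nat, Q (a ^+ k).

Definition minimal_prime_over (R : comNzRingType) (J P : R -> Prop) :=
  [/\ prime_ideal P, subset_of J P &
      forall P', prime_ideal P' -> subset_of J P' -> subset_of P' P -> subset_of P P'].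

Definition min_primary_decomposition (R : comNzRingType) (J : R -> Prop)
    (k : nat) (Qs : nat -> R -> Prop) :=
  [/\ forall i, (i < k)%N -> primary_ideal (Qs i),
      forall x, J x <-> (forall i, (i < k)%N -> Qs i x),
      forall i j, (i < k)%N -> (j < k)%N -> i <> j ->
        ~ (forall a, radical (Qs i) a <-> radical (Qs j) a) &
      forall i, (i < k)%N ->
        ~ (forall x, (forall j, (j < k)%N -> j <> i -> Qs j x) -> Qs i x)].

Definition isolated_primary_component (R : comNzRingType) (J q : R -> Prop) :=
  (exists (k : nat) (Qs : nat -> R -> Prop) (i : nat),
      [/\ min_primary_decomposition J k Qs, (i < k)%N &
          forall x, Qs i x <-> q x])
  /\ minimal_prime_over J (radical q).

Definition contraction (A : comNzRingType) (n : nat) (I : {mpoly A[n]} -> Prop)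
  : A -> Prop := fun a => I a%:MP.

Definition monomial_order (n : nat) (lt : rel 'X_{1..n}) :=
  [/\ irreflexive lt, transitive lt,
      (forall m1 m2, m1 != m2 -> lt m1 m2 || lt m2 m1),
      (forall g e f, lt e f -> lt (g + e)%MM (g + f)%MM) &
      (forall i : 'I_n, lt 0%MM U_(i)%MM)].

Definition is_lead_mon (R : nzRingType) (n : nat) (lt : rel 'X_{1..n})
    (f : {mpoly R[n]}) (m : 'X_{1..n}) :=
  m \in msupp f /\ forall m', m' \in msupp f -> m' != m -> lt m' m.

Definition init_terms (R : nzRingType) (n : nat) (lt : rel 'X_{1..n})
    (S : {mpoly R[n]} -> Prop) : {mpoly R[n]} -> Prop :=
  fun t => exists f m, [/\ S f, f != 0, is_lead_mon lt f m & t = f@_m *: 'X_[m]].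

Definition init_ideal (R : comNzRingType) (n : nat) (lt : rel 'X_{1..n})
    (I : {mpoly R[n]} -> Prop) : {mpoly R[n]} -> Prop :=
  gen_ideal (init_terms lt I).

Definition extend_ideal (A B : comNzRingType) (n : nat) (phi : A -> B)
    (K : {mpoly A[n]} -> Prop) : {mpoly B[n]} -> Prop :=
  gen_ideal (image_set (map_mpoly phi) K).

(* phi : A -> B exhibits B as A_p / q_p, i.e. as the localization of A/q at the
   image of the multiplicative set A \ p (standard characterization). *)
Definition is_loc_quot (A B : comNzRingType) (phi : A -> B) (p q : A -> Prop) :=
  [/\ forall s, ~ p s -> exists b, phi s * b = 1,
      forall b, exists a s, ~ p s /\ b * phi s = phi a &
      forall a, phi a = 0 <-> exists s, ~ p s /\ q (s * a)].

From HB Require Import structures.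
From mathcomp Require Import all_boot all_order all_algebra.
From mathcomp Require Import finmap multinomials.mpoly.
From Stdlib Require Import Classical.
Set Implicit Arguments. Unset Strict Implicit. Unset Printing Implicit Defensive.
Import GRing.Theory.
Local Open Scope ring_scope.

(* The image of an initial term in(f), f in I, is either
   0 or in(phi f), which gives one inclusion.  Conversely, every g in I B[x]
   satisfies phi(s) g = phi(f) for some f in I and s outside p.  Because q is an
   isolated component of I /\ A, some t outside p multiplies q into I /\ A; as
   ker phi is the p-saturation of q, every coefficient of f that dies in B can
   therefore be removed without leaving I, at the cost of a factor outside p.
   Once this is done, the support of f lies in that of g, so f and g have the
   same leading monomial and in(g) is a unit multiple of phi(in(f)). *)

Section Ideals.
Variable R : comNzRingType.
Implicit Types (J P Q S : R -> Prop).

Lemma ideal_sum J (I : eqType) (r : seq I) (F : I -> R) :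
  is_ideal J -> (forall i, i \in r -> J (F i)) -> J (\sum_(i <- r) F i).
Proof. by case=> J0 JD _ JF; rewrite big_seq; apply: big_ind. Qed.

Lemma idealMr J x r : is_ideal J -> J x -> J (x * r).
Proof. by case=> _ _ JM Jx; rewrite mulrC; apply: JM. Qed.

Lemma gen_ideal_is_ideal S : is_ideal (gen_ideal S).
Proof.
split.
- by exists [::]; rewrite big_nil.
- move=> _ _ [l1 [S1 ->]] [l2 [S2 ->]]; exists (l1 ++ l2); rewrite big_cat.
  by split=> // pr; rewrite mem_cat => /orP[]; [apply: S1 | apply: S2].
- move=> r _ [l [Sl ->]]; exists [seq (r * pr.1, pr.2) | pr <- l]; split.
    by move=> ? /mapP[pr lpr ->] /=; apply: Sl.
  by rewrite big_map mulr_sumr; apply: eq_bigr => pr _; rewrite mulrA.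
Qed.

Lemma sub_gen_ideal S x : S x -> gen_ideal S x.
Proof.
move=> Sx; exists [:: (1, x)]; split; first by move=> pr; rewrite inE => /eqP ->.
by rewrite big_seq1 mul1r.
Qed.

Lemma gen_ideal_min S J : is_ideal J -> (forall x, S x -> J x) ->
  forall x, gen_ideal S x -> J x.
Proof.
move=> J_ideal SJ _ [l [Sl ->]]; apply: ideal_sum => // pr lpr.
by case: J_ideal => _ _ JM; apply/JM/SJ/Sl.
Qed.

Lemma preimage_ideal (R' : comNzRingType) (f : {rmorphism R -> R'})
    (J : R' -> Prop) :
  is_ideal J -> is_ideal (fun x => J (f x)).
Proof.
case=> J0 JD JM; split=> [|x y Jx Jy|r x Jx]; first by rewrite rmorph0.
  by rewrite rmorphD; apply: JD.
by rewrite rmorphM; apply: JM.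
Qed.

Lemma eq_prime_ideal P P' : (forall a, P a <-> P' a) ->
  prime_ideal P -> prime_ideal P'.
Proof.
move=> PP' [[P0 PD PM] P1 Pp]; split; first split.
- exact/PP'.
- by move=> x y /PP' Px /PP' Py; apply/PP'/PD.
- by move=> r x /PP' Px; apply/PP'/PM.
- by move/PP'.
- by move=> a b /PP' /Pp [] ?; [left | right]; apply/PP'.
Qed.

Lemma prime_ideal_expr P a k : prime_ideal P -> P (a ^+ k) -> P a.
Proof.
case=> _ P1 PM; elim: k => [|k IHk]; first by rewrite expr0.
by rewrite exprS => /PM [].
Qed.

Lemma prime_compl_mul P a b : prime_ideal P -> ~ P a -> ~ P b -> ~ P (a * b).
Proof. by case=> _ _ PM Pa Pb /PM []. Qed.

Lemma primary_radical_prime Q : primary_ideal Q -> prime_ideal (radical Q).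
Proof.
case=> Q_ideal Q1 Qp; have [Q0 QD QM] := Q_ideal.
split; first split.
- by exists 1%N; rewrite expr1.
- move=> x y [m Qxm] [l Qyl]; exists (m + l)%N; rewrite exprDn.
  apply: ideal_sum => // i _.
  rewrite -mulr_natr; apply: idealMr => //.
  have [li | il] := leqP l i.
    by rewrite -(subnKC li) exprD mulrA mulrAC; apply: QM.
  have -> : (m + l - i = m + (l - i))%N by rewrite addnBA // ltnW.
  by rewrite exprD -mulrA mulrC; apply: QM.
- by move=> r x [m Qxm]; exists m; rewrite exprMn; apply: QM.
- by case=> k; rewrite expr1n.
- move=> a b [m]; rewrite exprMn => /Qp [Qam | [k Qbmk]]; first by left; exists m.
  by right; exists (m * k)%N; rewrite exprM.
Qed.

Lemma radical_primary_minimal J P Q :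
  minimal_prime_over J P -> primary_ideal Q -> subset_of J Q -> subset_of Q P ->
  forall a, radical Q a <-> P a.
Proof.
case=> P_prime _ P_min Q_primary JQ QP.
have rQ_prime := primary_radical_prime Q_primary.
have rQP : subset_of (radical Q) P.
  by move=> a [k Qak]; apply: prime_ideal_expr P_prime (QP _ Qak).
have JrQ : subset_of J (radical Q) by move=> a /JQ Qa; exists 1%N; rewrite expr1.
by move=> a; split; [apply: rQP | apply: P_min].
Qed.

Lemma outside_prime_in_all P (I : eqType) (Js : I -> R -> Prop) (r : seq I) :
  prime_ideal P ->
  (forall j, j \in r -> is_ideal (Js j) /\ exists t, ~ P t /\ Js j t) ->
  exists t, ~ P t /\ forall j, j \in r -> Js j t.
Proof.
move=> P_prime; elim: r => [|j r IHr] Js_r.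
  by exists 1; split=> //; case: P_prime.
have [Jj_ideal [s [Ps Jjs]]] := Js_r j (mem_head j r).
have [t [Pt Jt]] : exists t, ~ P t /\ forall i, i \in r -> Js i t.
  by apply: IHr => i ir; apply/Js_r/mem_behead.
exists (s * t); split; first exact: prime_compl_mul.
move=> i; rewrite inE => /orP[/eqP -> | ir]; first exact: idealMr.
have [|Ji_ideal _] := Js_r i; first by rewrite inE ir orbT.
by rewrite mulrC; apply: idealMr (Jt _ ir).
Qed.

(* The other components are not contained in the minimal prime radical q, so
   an element outside radical q lying in all of them multiplies q into J. *)
Lemma isolated_component_saturation J q : isolated_primary_component J q ->
  exists t, ~ radical q t /\ forall x, q x -> J (t * x).
Proof.
case=> -[k [Qs [i [[Qs_primary JE Qs_rad_neq _] ik QiE]]]] rq_min.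
have JQs j : (j < k)%N -> subset_of J (Qs j) by move=> jk x /JE; apply.
pose others := [seq j <- iota 0 k | j != i].
have others_out j : j \in others ->
    is_ideal (Qs j) /\ exists t, ~ radical q t /\ Qs j t.
  rewrite mem_filter mem_iota add0n => /andP[ji jk].
  have [Qj_ideal _ _] := Qs_primary j jk; split=> //.
  apply: NNPP => Qj_in; apply: (Qs_rad_neq j i jk ik (elimN eqP ji)) => a.
  have Qj_sub : subset_of (Qs j) (radical q).
    by move=> t Qjt; apply: NNPP => rqt; apply: Qj_in; exists t.
  rewrite (radical_primary_minimal rq_min (Qs_primary j jk) (JQs j jk) Qj_sub).
  by split=> -[m Qam]; exists m; apply/QiE.
have [rq_prime _ _] := rq_min.
have [t [rqt Qst]] := outside_prime_in_all rq_prime others_out.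
exists t; split=> // x qx; apply/JE => j jk.
have [[_ _ QjM] _ _] := Qs_primary j jk.
have [eji | ji] := eqVneq j i; first by apply: QjM; rewrite eji; apply/QiE.
rewrite mulrC; apply: QjM; apply: Qst.
by rewrite mem_filter mem_iota add0n ji.
Qed.

End Ideals.

Lemma is_lead_mon_sub (R R' : nzRingType) (n : nat) (lt : rel 'X_{1..n})
    (f : {mpoly R[n]}) (g : {mpoly R'[n]}) m :
  {subset msupp f <= msupp g} -> m \in msupp f -> is_lead_mon lt g m ->
  is_lead_mon lt f m.
Proof. by move=> fg fm [_ g_lead]; split=> // m' /fg; apply: g_lead. Qed.

Lemma msupp_map_mpoly_sub (R R' : nzRingType) (n : nat)
    (f : {additive R -> R'}) (p : {mpoly R[n]}) :
  {subset msupp (map_mpoly f p) <= msupp p}.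
Proof.
move=> m; rewrite !mcoeff_msupp mcoeff_map_mpoly.
by apply: contraNneq => ->; rewrite raddf0.
Qed.

Section ExtendInit.
Variables (A B : comNzRingType) (phi : {rmorphism A -> B}) (n : nat).
Variables (lt : rel 'X_{1..n}) (I : {mpoly A[n]} -> Prop).

Lemma map_init_term t : init_terms lt I t ->
  init_ideal lt (extend_ideal phi I) (map_mpoly phi t).
Proof.
case=> f [m [If _ f_lead ->]]; rewrite map_mpolyZ map_mpolyX.
have [-> | phifm0] := eqVneq (phi f@_m) 0.
  by rewrite scale0r; have [] := gen_ideal_is_ideal (init_terms lt (extend_ideal phi I)).
have phif_m : m \in msupp (map_mpoly phi f).
  by rewrite mcoeff_msupp mcoeff_map_mpoly.
apply: sub_gen_ideal; exists (map_mpoly phi f), m; split.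
- by apply: sub_gen_ideal; exists f.
- by apply: contraNneq phifm0 => phif0; rewrite -mcoeff_map_mpoly phif0 mcoeff0.
- by apply: is_lead_mon_sub phif_m f_lead; apply: msupp_map_mpoly_sub.
- by rewrite mcoeff_map_mpoly.
Qed.

Lemma extend_init_sub g :
  extend_ideal phi (init_ideal lt I) g -> init_ideal lt (extend_ideal phi I) g.
Proof.
apply: gen_ideal_min => [|_ [f [inIf ->]]]; first exact: gen_ideal_is_ideal.
move: f inIf; apply: gen_ideal_min; last exact: map_init_term.
exact: (preimage_ideal (map_mpoly phi) (gen_ideal_is_ideal _)).
Qed.

End ExtendInit.

Section Localization.
Variables (A B : comNzRingType) (phi : {rmorphism A -> B}) (p : A -> Prop).
Variable n : nat.
Hypothesis p_prime : prime_ideal p.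
Hypothesis phi_unit : forall s, ~ p s -> exists b, phi s * b = 1.
Hypothesis phi_frac : forall b, exists a s, ~ p s /\ b * phi s = phi a.

Let notp1 : ~ p 1. Proof. by case: p_prime. Qed.

Let notpM a b : ~ p a -> ~ p b -> ~ p (a * b).
Proof. exact: prime_compl_mul. Qed.

Lemma map_mpoly_denominator (h : {mpoly B[n]}) :
  exists c s, ~ p s /\ map_mpoly phi c = phi s *: h.
Proof.
elim/mpolyind: h => [|b m h _ _ [c [s [ps hc]]]].
  by exists 0, 1; rewrite raddf0 scaler0.
have [a [t [pt bt]]] := phi_frac b.
exists ((s * a) *: 'X_[m] + t *: c), (s * t); split; first exact: notpM.
rewrite raddfD /= !map_mpolyZ map_mpolyX hc scalerDr !scalerA !rmorphM -bt.
by rewrite [b * _]mulrC mulrA [phi t * _]mulrC.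
Qed.

Lemma extend_ideal_denominator (I : {mpoly A[n]} -> Prop) : is_ideal I ->
  forall g, extend_ideal phi I g ->
  exists f s, [/\ I f, ~ p s & map_mpoly phi f = phi s *: g].
Proof.
case=> I0 ID IM; apply: gen_ideal_min => [|_ [f [If ->]]]; last first.
  by exists f, 1; rewrite rmorph1 scale1r.
split.
- by exists 0, 1; rewrite raddf0 scaler0.
- move=> x y [f1 [s1 [If1 ps1 f1x]]] [f2 [s2 [If2 ps2 f2y]]].
  exists (s2%:MP * f1 + s1%:MP * f2), (s1 * s2).
  split; [by apply: ID; apply: IM | exact: notpM |].
  rewrite raddfD /= !mul_mpolyC !map_mpolyZ f1x f2y !scalerA scalerDr rmorphM.
  by rewrite [phi s2 * _]mulrC.
- move=> h x [f [s [If ps fx]]]; have [c [s' [ps' hc]]] := map_mpoly_denominator h.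
  exists (c * f), (s' * s); split; [exact: IM | exact: notpM |].
  have -> : map_mpoly phi (c * f) = map_mpoly phi c * map_mpoly phi f.
    exact: rmorphM.
  by rewrite hc fx rmorphM -scalerAl -scalerAr scalerA.
Qed.

Variable I : {mpoly A[n]} -> Prop.
Hypothesis I_ideal : is_ideal I.
Hypothesis ker_phi_saturated :
  forall a, phi a = 0 -> exists t, ~ p t /\ I (t * a)%:MP.

Lemma drop_term_in_ideal f m : I f -> phi f@_m = 0 ->
  exists t, ~ p t /\ I (t *: (f - f@_m *: 'X_[m])).
Proof.
move=> If /ker_phi_saturated [t [pt Itf]]; exists t; split=> //.
have [_ ID IM] := I_ideal.
rewrite scalerBr scalerA -!mul_mpolyC; apply: ID; first exact: IM.
by rewrite -mulN1r; apply: (IM); rewrite mulrC; apply: IM.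
Qed.

Lemma clear_support g (r : seq 'X_{1..n}) f s :
  I f -> ~ p s -> map_mpoly phi f = phi s *: g ->
  (forall m, f@_m != 0 -> g@_m = 0 -> m \in r) ->
  exists f' s', [/\ I f', ~ p s', map_mpoly phi f' = phi s' *: g &
                    {subset msupp f' <= msupp g}].
Proof.
elim: r f s => [|m r IHr] f s If ps fg bad_f.
  exists f, s; split=> // m'; rewrite !mcoeff_msupp => fm'.
  by apply/eqP => /(bad_f _ fm').
have [gm0 | gm] := eqVneq g@_m 0; last first.
  apply: IHr If ps fg _ => m' fm' gm'; move: (bad_f _ fm' gm').
  by rewrite inE => /orP[/eqP em'|//]; move: gm; rewrite -em' gm' eqxx.
have phifm : phi f@_m = 0 by rewrite -mcoeff_map_mpoly fg mcoeffZ gm0 mulr0.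
have [t [pt If1]] := drop_term_in_ideal If phifm.
apply: IHr If1 (notpM pt ps) _ _.
  rewrite map_mpolyZ raddfB /= map_mpolyZ phifm scale0r subr0 fg.
  by rewrite scalerA rmorphM.
move=> m'; rewrite mcoeffZ mcoeffB mcoeffZ mcoeffX.
have [<- | mm'] := eqVneq m m'; first by rewrite mulr1 subrr mulr0 eqxx.
rewrite mulr0 subr0 => /eqP tf gm'; have fm' : f@_m' != 0.
  by apply/eqP => fm'0; apply: tf; rewrite fm'0 mulr0.
by move: (bad_f _ fm' gm'); rewrite inE eq_sym (negbTE mm').
Qed.

Lemma init_term_extend lt t : init_terms lt (extend_ideal phi I) t ->
  extend_ideal phi (init_ideal lt I) t.
Proof.
case=> g [E [Ig _ g_lead ->]].
have [f [s [If ps fg]]] := extend_ideal_denominator I_ideal Ig.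
have [|f' [s' [If' ps' f'g f'_supp]]] := clear_support (r := msupp f) If ps fg.
  by move=> m; rewrite mcoeff_msupp.
have [b s'b] := phi_unit ps'.
have gE : g@_E = b * phi f'@_E.
  by rewrite -mcoeff_map_mpoly f'g mcoeffZ mulrA [b * _]mulrC s'b mul1r.
have f'E : E \in msupp f'.
  move: g_lead.1; rewrite !mcoeff_msupp gE.
  by apply: contraNneq => ->; rewrite rmorph0 mulr0.
have f'0 : f' != 0 by apply: contraTneq f'E => ->; rewrite msupp0.
exists [:: (b%:MP, map_mpoly phi (f'@_E *: 'X_[E]))]; split.
  move=> pr; rewrite inE => /eqP -> /=; exists (f'@_E *: 'X_[E]); split=> //.
  apply: sub_gen_ideal; exists f', E; split=> //.
  exact: is_lead_mon_sub f'_supp f'E g_lead.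
by rewrite big_seq1 /= map_mpolyZ map_mpolyX mul_mpolyC scalerA gE.
Qed.

Lemma init_extend_sub lt g :
  init_ideal lt (extend_ideal phi I) g -> extend_ideal phi (init_ideal lt I) g.
Proof.
by apply: gen_ideal_min; [exact: gen_ideal_is_ideal | exact: init_term_extend].
Qed.

End Localization.

Theorem proposition3p10 (A : comNzRingType) (n : nat) (lt : rel 'X_{1..n})
    (hlt : monomial_order lt) (hA : noetherian A)
    (I : {mpoly A[n]} -> Prop) (hI : is_ideal I)
    (q : A -> Prop) (hq : isolated_primary_component (contraction I) q)
    (p : A -> Prop) (hp : forall a, p a <-> radical q a)
    (B : comNzRingType) (phi : {rmorphism A -> B}) (hB : is_loc_quot phi p q) :
  forall g : {mpoly B[n]},
    extend_ideal phi (init_ideal lt I) g <-> init_ideal lt (extend_ideal phi I) g.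
Proof.
have p_prime : prime_ideal p.
  by case: hq => _ [rq_prime _ _]; apply: eq_prime_ideal rq_prime => a; split=> /hp.
have [phi_unit phi_frac ker_phi] := hB.
have ker_phi_saturated a : phi a = 0 -> exists t, ~ p t /\ I (t * a)%:MP.
  have [t [rqt tq]] := isolated_component_saturation hq.
  move=> /ker_phi [s [ps qsa]]; exists (t * s); split.
    by apply: prime_compl_mul => // /hp.
  by rewrite -mulrA; apply: tq.
move=> g; split; first exact: extend_init_sub.
exact: (init_extend_sub (phi := phi) p_prime phi_unit phi_frac hI
          ker_phi_saturated).
Qed.
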